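(* Let $g>0$, let $\hat\nu:\mathbb R\to[\nu_0,\nu_1]$ be a stretch-limiting constitutive function as in the context, and let $\epsilon\in(0,1)$. For $\gamma>0$ and $a\in(0,\nu_1)$ let $(\lambda,\mu)$, $\lambda>0$, be the unique solution of $$a\mathbf i+0\,\mathbf k=\int_0^1\frac{\hat\nu(\delta(s))}{\delta(s)}\big(\lambda\mathbf i+(\mu+g\gamma s)\mathbf k\big)\,ds,\qquad \delta(s)=\sqrt{\lambda^2+(\mu+g\gamma s)^2}.$$ Then for all $\gamma>0$ sufficiently small (depending on $\epsilon$ and $\hat\nu$) the following holds. If $$\nu_1-\frac{(g\gamma)^2}{24N_1^2}\big(\nu_1+(2-3\epsilon)\hat\nu_{N^-}(N_1)N_1\big)\le a<\nu_1\frac{2N_1}{g\gamma}\sinh^{-1}\frac{g\gamma}{2N_1},$$ then $\frac{N_1^2-\lambda^2}{(g\gamma)^2}\in(0,\tfrac14)$, i.e. the tensile catenary is a union of an extensible segment and two inextensible segments. Conversely, if $\frac{N_1^2-\lambda^2}{(g\gamma)^2}\in(0,\tfrac14)$, then $$\nu_1-\frac{(g\gamma)^2}{24N_1^2}\big(\nu_1+(2+3\epsilon)\hat\nu_{N^-}(N_1)N_1\big)\le a<\nu_1\frac{2N_1}{g\gamma}\sinh^{-1}\frac{g\gamma}{2N_1}.$$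
   Context: Stretch-limited constitutive function: constants $N_0<0<N_1$, $0<\nu_0<1<\nu_1$ with $\hat\nu(N)=\nu_0$ for $N\le N_0$, $\hat\nu(N)=\nu_1$ for $N\ge N_1$, $\hat\nu\in C^\infty([N_0,N_1];[\nu_0,\nu_1])$, $\hat\nu(0)=1$, $\hat\nu'\ge c>0$ on $[N_0,N_1]$; $\hat\nu_{N^-}(N_1)$ is the left derivative of $\hat\nu$ at $N_1$. The equation describes a tensile uniform catenary (mass $\gamma$ per unit reference length) with supports at $\mathbf 0$ and $a\mathbf i$, tension $N(s)=\delta(s)$, stretch $\hat\nu(\delta(s))$. It is a known fact that for $a\in(0,\nu_1)$ a unique solution with $\lambda>0$ exists, and $\mu=-g\gamma/2$. A segment is inextensible where $\delta\ge N_1$ (stretch $\nu_1$) and extensible where $\delta<N_1$; the condition $\frac{N_1^2-\lambda^2}{(g\gamma)^2}\in(0,1/4)$ is equivalent to $\delta\ge N_1$ on $[0,s_-]\cup[s_+,1]$ and $0<\delta<N_1$ on $(s_-,s_+)$, where $s_\pm=\frac12\pm\frac{1}{g\gamma}\sqrt{N_1^2-\lambda^2}$. *)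

From Stdlib Require Import Reals Lra.
From Coquelicot Require Import Coquelicot.
Open Scope R_scope.

Definition stretch_limited (nu : R -> R) (N0 N1 nu0 nu1 : R) : Prop :=
  N0 < 0 < N1 /\ 0 < nu0 < 1 /\ 1 < nu1 /\
  (forall N, N <= N0 -> nu N = nu0) /\
  (forall N, N1 <= N -> nu N = nu1) /\
  (forall N, N0 <= N <= N1 -> nu0 <= nu N <= nu1) /\
  nu 0 = 1 /\
  exists F : R -> R,
    (forall (k : nat) (x : R), ex_derive_n F k x) /\
    (forall N, N0 <= N <= N1 -> F N = nu N) /\
    exists c, 0 < c /\ forall N, N0 <= N <= N1 -> c <= Derive F N.

Definition left_derivative (f : R -> R) (x d : R) : Prop :=
  filterlim (fun y => (f y - f x) / (y - x)) (at_left x) (locally d).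

Definition tension (g gam lam mu s : R) : R :=
  sqrt (lam ^ 2 + (mu + g * gam * s) ^ 2).

Definition catenary_solution (nu : R -> R) (g gam a lam mu : R) : Prop :=
  is_RInt (fun s => nu (tension g gam lam mu s) / tension g gam lam mu s * lam)
    0 1 a /\
  is_RInt (fun s => nu (tension g gam lam mu s) / tension g gam lam mu s
                    * (mu + g * gam * s)) 0 1 0.

From Stdlib Require Import Reals Lra Psatz.
From Coquelicot Require Import Coquelicot.
Open Scope R_scope.

(* Reflecting s |-> 1 - s in the vertical equilibrium equation forces
   mu = - g gam / 2, so the tension delta(s) = sqrt (lam^2 + (g gam)^2 (s - 1/2)^2) is smallest
   (= lam) at midspan and largest (= sqrt (lam^2 + (g gam)^2 / 4)) at the supports: the catenary
   has one extensible and two inextensible segments exactly when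
   N1^2 - (g gam)^2 / 4 < lam^2 < N1^2.  The integrand nu(delta) lam / delta of the horizontal
   equation is nondecreasing in lam, so a is compared with its values at the two thresholds.
   At lam = N1 the chain is inextensible and a = nu1 (2 N1 / g gam) arsinh (g gam / (2 N1)).
   At lam^2 = N1^2 - (g gam)^2 / 4 the tension stays within O((g gam)^2) of N1, where
   nu1 - nu(delta) lies between (1 -+ eps/2) nu'(N1-) (N1 - delta); bounding the integrand by quartic
   polynomials in s - 1/2 and integrating gives both bounds up to O((g gam)^4), which the
   +- 3 eps slack absorbs once gam is small. *)

Lemma MVT_lower_bound (F : R -> R) (c y z : R) :
  (forall x, ex_derive F x) -> (forall x, y <= x <= z -> c <= Derive F x) -> y <= z ->
  c * (z - y) <= F z - F y.
Proof.
  intros HF Hc Hyz.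
  destruct (MVT_gen F y z (Derive F)) as [xi [Hxi ->]].
  - intros x _. apply Derive_correct, HF.
  - intros x _. apply continuity_pt_filterlim. exact (ex_derive_continuous F x (HF x)).
  - rewrite Rmin_left, Rmax_right in Hxi by lra.
    specialize (Hc xi Hxi). nra.
Qed.

Lemma left_derivative_linear_bounds (f : R -> R) (x d eta : R) :
  left_derivative f x d -> 0 < eta ->
  exists r, 0 < r /\ forall y, x - r < y < x ->
    (d - eta) * (x - y) < f x - f y < (d + eta) * (x - y).
Proof.
  intros Hder Heta.
  destruct (proj1 (filterlim_locally _ _) Hder (mkposreal eta Heta)) as [r Hr].
  exists r. split; [apply cond_pos|]. intros y Hy.
  assert (Hball : ball x r y).
  { change (Rabs (y - x) < r). rewrite Rabs_left by lra. lra. }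
  specialize (Hr y Hball ltac:(lra)).
  change (Rabs ((f y - f x) / (y - x) - d) < eta) in Hr.
  set (q := (f y - f x) / (y - x)) in Hr.
  assert (Hq : f x - f y = q * (x - y)) by (unfold q; field; lra).
  apply Rabs_def2 in Hr. rewrite Hq. split; nra.
Qed.

Lemma Rdiv_le_cross a b c d : 0 < b -> 0 < d -> a * d <= c * b -> a / b <= c / d.
Proof.
  intros Hb Hd H.
  apply Rle_div_l; [lra|]. unfold Rdiv. rewrite Rmult_assoc, (Rmult_comm (/ d)).
  rewrite <- Rmult_assoc. apply Rle_div_r; [lra|]. exact H.
Qed.

Lemma arcsinh_opp y : arcsinh (- y) = - arcsinh y.
Proof.
  rewrite <- (sinh_arcsinh y) at 1.
  replace (- sinh (arcsinh y)) with (sinh (- arcsinh y)) by (unfold sinh; rewrite Ropp_involutive; field).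
  apply arcsinh_sinh.
Qed.

Lemma is_RInt_reflect (f : R -> R) (l : R) :
  is_RInt f 0 1 l -> is_RInt (fun s => f (1 - s)) 0 1 l.
Proof.
  intros Hf.
  assert (Hswap : is_RInt f (-1 * 0 + 1) (-1 * 1 + 1) (- l)).
  { replace (-1 * 0 + 1) with 1 by ring. replace (-1 * 1 + 1) with 0 by ring.
    exact (is_RInt_swap _ _ _ _ Hf). }
  pose proof (is_RInt_opp _ _ _ _ (is_RInt_comp_lin f (-1) 1 0 1 _ Hswap)) as Hrefl.
  replace l with (opp (- l) : R) by (unfold opp; simpl; ring).
  refine (is_RInt_ext _ _ _ _ _ _ Hrefl). intros s _.
  unfold opp, scal; simpl; unfold mult; simpl. replace (-1 * s + 1) with (1 - s) by ring. ring.
Qed.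

Section StretchLimited.

Variables (nu : R -> R) (N0 N1 nu0 nu1 : R).
Hypothesis Hnu : stretch_limited nu N0 N1 nu0 nu1.

Lemma stretch_limited_constants : N0 < 0 < N1 /\ 0 < nu0 < 1 /\ 1 < nu1.
Proof. destruct Hnu as [HN [Hnu0 [Hnu1 _]]]. auto. Qed.

Lemma stretch_limited_saturated y : N1 <= y -> nu y = nu1.
Proof. destruct Hnu as [_ [_ [_ [_ [Hhi _]]]]]. apply Hhi. Qed.

Lemma stretch_limited_range y : nu0 <= nu y <= nu1.
Proof.
  destruct Hnu as [HN [Hnu0 [Hnu1 [Hlo [Hhi [Hmid _]]]]]].
  destruct (Rle_dec y N0); [rewrite Hlo by lra; lra|].
  destruct (Rle_dec N1 y); [rewrite Hhi by lra; lra|].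
  apply Hmid; lra.
Qed.

Lemma stretch_limited_increment :
  exists c, 0 < c /\ forall y z, N0 <= y <= z -> z <= N1 -> c * (z - y) <= nu z - nu y.
Proof.
  destruct Hnu as [_ [_ [_ [_ [_ [_ [_ [F [HF [HFnu [c [Hc HcF]]]]]]]]]]]].
  exists c. split; [exact Hc|]. intros y z Hy Hz.
  rewrite <- (HFnu y), <- (HFnu z) by lra.
  apply MVT_lower_bound; [exact (fun x => HF 1%nat x) | intros x Hx; apply HcF | ]; lra.
Qed.

Lemma stretch_limited_nondecreasing y z : y <= z -> nu y <= nu z.
Proof.
  intros Hyz.
  destruct Hnu as [HN [_ [_ [Hlo _]]]].
  destruct stretch_limited_increment as [c [Hc Hinc]].
  pose proof (stretch_limited_range y). pose proof (stretch_limited_range z).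
  destruct (Rle_dec z N0); [rewrite !Hlo by lra; lra|].
  destruct (Rle_dec N1 y); [rewrite !stretch_limited_saturated by lra; lra|].
  destruct (Rle_dec y N0); [rewrite (Hlo y) by lra; lra|].
  destruct (Rle_dec N1 z); [rewrite (stretch_limited_saturated z) by lra; lra|].
  specialize (Hinc y z ltac:(lra) ltac:(lra)). nra.
Qed.

Lemma stretch_limited_left_derivative_pos dnu1 : left_derivative nu N1 dnu1 -> 0 < dnu1.
Proof.
  intros Hder.
  destruct stretch_limited_constants as [HN _].
  destruct stretch_limited_increment as [c [Hc Hinc]].
  destruct (left_derivative_linear_bounds nu N1 dnu1 (c / 2) Hder ltac:(lra)) as [r [Hr Hnear]].
  set (y := Rmax N0 (N1 - r / 2)).
  assert (Hy : N0 <= y /\ N1 - r / 2 <= y) by (split; [apply Rmax_l | apply Rmax_r]).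
  assert (HyN1 : y < N1) by (apply Rmax_lub_lt; lra).
  specialize (Hnear y ltac:(lra)). specialize (Hinc y N1 ltac:(lra) ltac:(lra)).
  nra.
Qed.

End StretchLimited.

Definition hypot (a b : R) : R := sqrt (a ^ 2 + b ^ 2).

Lemma hypot_sq a b : hypot a b ^ 2 = a ^ 2 + b ^ 2.
Proof. apply pow2_sqrt. nra. Qed.

Lemma hypot_pos a b : 0 < a -> 0 < hypot a b.
Proof. intros. apply sqrt_lt_R0. nra. Qed.

Lemma hypot_comm a b : hypot a b = hypot b a.
Proof. unfold hypot. f_equal. ring. Qed.

Lemma hypot_oppr a b : hypot a (- b) = hypot a b.
Proof. unfold hypot. f_equal. ring. Qed.

Lemma hypot_le a b a' b' : a ^ 2 + b ^ 2 <= a' ^ 2 + b' ^ 2 -> hypot a b <= hypot a' b'.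
Proof. apply sqrt_le_1_alt. Qed.

Lemma le_hypot a b : 0 <= a -> a <= hypot a b.
Proof. intros. rewrite <- (sqrt_pow2 a) at 1 by lra. apply sqrt_le_1_alt. nra. Qed.

Lemma sq_le_of_hypot_le a b c : hypot a b <= hypot a c -> b ^ 2 <= c ^ 2.
Proof.
  intros H. pose proof (hypot_sq a b). pose proof (hypot_sq a c).
  assert (0 <= hypot a b) by apply sqrt_pos. nra.
Qed.

Lemma hypot_ratio_le a b c : 0 < a <= b -> a / hypot a c <= b / hypot b c.
Proof.
  intros Hab.
  pose proof (hypot_pos a c ltac:(lra)). pose proof (hypot_pos b c ltac:(lra)).
  pose proof (hypot_sq a c) as Ha2. pose proof (hypot_sq b c) as Hb2.
  apply Rdiv_le_cross; [lra | lra |].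
  assert (Hsq : (a * hypot b c) ^ 2 <= (b * hypot a c) ^ 2).
  { rewrite !Rpow_mult_distr, Ha2, Hb2. assert (a ^ 2 <= b ^ 2) by nra. nra. }
  assert (0 <= b * hypot a c) by nra. nra.
Qed.

Lemma hypot_ratio_nonneg lam t : 0 < lam -> 0 <= t -> 0 <= t / hypot lam t.
Proof. intros. apply Rdiv_le_0_compat; [lra | apply hypot_pos; lra]. Qed.

Lemma hypot_ratio_nonpos lam t : 0 < lam -> t <= 0 -> t / hypot lam t <= 0.
Proof.
  intros. pose proof (hypot_ratio_nonneg lam (- t) ltac:(lra) ltac:(lra)) as Hopp.
  rewrite hypot_oppr in Hopp. unfold Rdiv in *. lra.
Qed.

Lemma hypot_ratio_nondecreasing lam q p : 0 < lam -> q <= p -> q / hypot lam q <= p / hypot lam p.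
Proof.
  intros Hlam Hqp.
  pose proof (hypot_pos lam q Hlam). pose proof (hypot_pos lam p Hlam).
  destruct (Rlt_le_dec 0 q) as [Hq | Hq].
  - rewrite !(hypot_comm lam). apply hypot_ratio_le. lra.
  - destruct (Rlt_le_dec p 0) as [Hp | Hp].
    + pose proof (hypot_ratio_le (- p) (- q) lam ltac:(lra)) as Hopp.
      rewrite <- !(hypot_comm lam), !hypot_oppr in Hopp. unfold Rdiv in *. lra.
    + pose proof (hypot_ratio_nonneg lam p Hlam Hp).
      pose proof (hypot_ratio_nonpos lam q Hlam Hq). lra.
Qed.

Lemma hypot_ratio_upper a t N : 0 < a -> a ^ 2 + t ^ 2 <= N ^ 2 ->
  a / hypot a t <= 1 - t ^ 2 / (2 * N ^ 2).
Proof.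
  intros Ha HN.
  pose proof (hypot_pos a t Ha) as Hh. pose proof (hypot_sq a t) as Hh2.
  pose proof (pow2_ge_0 t). assert (0 < a ^ 2) by (apply pow_lt; lra).
  assert (HN2 : 0 < N ^ 2) by lra.
  assert (HN0 : N <> 0) by (intros ->; simpl in HN2; lra).
  set (w := t ^ 2 / (2 * N ^ 2)).
  assert (Hw : t ^ 2 = 2 * w * N ^ 2) by (unfold w; field; exact HN0).
  assert (Hw1 : 0 <= w <= 1 / 2) by (split; nra).
  set (r := a / hypot a t).
  assert (0 <= r) by (apply Rdiv_le_0_compat; lra).
  (* (1 - w)^2 (a^2 + t^2) - a^2 = 2 w (N^2 - a^2 - t^2) + w^2 (a^2 + t^2) *)
  assert (Hgap : a ^ 2 <= (1 - w) ^ 2 * (a ^ 2 + t ^ 2)) by nra.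
  assert (r ^ 2 * (a ^ 2 + t ^ 2) = a ^ 2) by (unfold r; rewrite <- Hh2; field; lra).
  assert (r ^ 2 <= (1 - w) ^ 2) by nra.
  nra.
Qed.

Lemma hypot_ratio_lower a t : 0 < a -> t ^ 2 <= a ^ 2 ->
  1 - t ^ 2 / a ^ 2 / 2 - (t ^ 2 / a ^ 2) ^ 2 / 2 <= a / hypot a t.
Proof.
  intros Ha Hta.
  pose proof (hypot_pos a t Ha) as Hh. pose proof (hypot_sq a t) as Hh2.
  set (z := t ^ 2 / a ^ 2).
  pose proof (pow2_ge_0 t). assert (Ha2 : 0 < a ^ 2) by (apply pow_lt; lra).
  assert (Hz : t ^ 2 = z * a ^ 2) by (unfold z; field; lra).
  assert (Hz1 : 0 <= z <= 1) by (split; nra).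
  set (r := a / hypot a t).
  assert (0 <= r) by (apply Rdiv_le_0_compat; lra).
  assert (Hr2 : r ^ 2 * (1 + z) = 1).
  { assert (r ^ 2 * (a ^ 2 + t ^ 2) = a ^ 2) by (unfold r; rewrite <- Hh2; field; lra). nra. }
  set (m := 1 - z / 2 - z ^ 2 / 2).
  assert (Hm : m = (1 - z) * (1 + z / 2)) by (unfold m; field).
  assert (0 <= m) by (rewrite Hm; nra).
  (* m^2 (1 + z) = [(1 - z) (1 + z/2)^2] [(1 - z) (1 + z)], a product of two factors in [0, 1] *)
  assert (m ^ 2 * (1 + z) <= 1).
  { assert (0 <= (1 - z) * (1 + z / 2) ^ 2 <= 1) by (split; nra).
    assert (0 <= (1 - z) * (1 + z) <= 1) by (split; nra).
    replace (m ^ 2 * (1 + z)) with (((1 - z) * (1 + z / 2) ^ 2) * ((1 - z) * (1 + z)))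
      by (rewrite Hm; ring).
    nra. }
  assert (m ^ 2 <= r ^ 2) by nra.
  nra.
Qed.

Section Centering.

Variables (nu : R -> R) (nu0 lam : R).
Hypothesis nu_mono : forall y z, y <= z -> nu y <= nu z.
Hypothesis nu_ge : forall y, nu0 <= nu y.
Hypothesis Hlam : 0 < lam.

Let sine t := t / hypot lam t.
Let vertical t := nu (hypot lam t) / hypot lam t * t.

Lemma is_RInt_sine mu x : x <> 0 ->
  is_RInt (fun s => sine (mu + x * s)) 0 1 ((hypot lam (mu + x) - hypot lam mu) / x).
Proof.
  intros Hx.
  set (F s := hypot lam (mu + x * s) / x).
  replace ((hypot lam (mu + x) - hypot lam mu) / x) with (minus (F 1) (F 0))
    by (unfold F, minus, plus, opp; simpl; rewrite Rmult_1_r, Rmult_0_r, Rplus_0_r; field; lra).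
  assert (Hpos : forall t, 0 < lam * (lam * 1) + t * (t * 1))
    by (intro t; pose proof (hypot_pos lam t Hlam); unfold hypot in *; simpl in *; nra).
  apply (@is_RInt_derive R_CompleteNormedModule F).
  - intros s _. unfold F, sine, hypot. auto_derive; [apply Hpos|].
    replace (lam * (lam * 1) + (mu + x * s) * ((mu + x * s) * 1))
      with (lam ^ 2 + (mu + x * s) ^ 2) by ring.
    pose proof (hypot_pos lam (mu + x * s) Hlam). unfold hypot in *. field. lra.
  - intros s _. apply (@ex_derive_continuous R_AbsRing R_NormedModule). unfold sine, hypot. auto_derive.
    split; [apply Hpos | split; [apply Rgt_not_eq, sqrt_lt_R0, Hpos | auto]].
Qed.

Lemma vertical_sub_sine_nondecreasing q p :
  q <= p -> vertical q - nu0 * sine q <= vertical p - nu0 * sine p.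
Proof.
  intros Hqp.
  pose proof (hypot_pos lam q Hlam). pose proof (hypot_pos lam p Hlam).
  assert (Hv : forall t, vertical t = nu (hypot lam t) * sine t).
  { intro t. pose proof (hypot_pos lam t Hlam). unfold vertical, sine. field. lra. }
  rewrite !Hv.
  pose proof (hypot_ratio_nondecreasing lam q p Hlam Hqp) as Hsine. fold (sine q) (sine p) in Hsine.
  pose proof (nu_ge (hypot lam q)). pose proof (nu_ge (hypot lam p)).
  destruct (Rle_dec 0 q).
  - assert (nu (hypot lam q) <= nu (hypot lam p)) by (apply nu_mono, hypot_le; nra).
    assert (0 <= sine q) by (apply hypot_ratio_nonneg; lra). nra.
  - destruct (Rle_dec 0 p).
    + assert (0 <= sine p) by (apply hypot_ratio_nonneg; lra).
      assert (sine q <= 0) by (apply hypot_ratio_nonpos; lra). nra.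
    + assert (nu (hypot lam p) <= nu (hypot lam q)) by (apply nu_mono, hypot_le; nra).
      assert (sine p <= 0) by (apply hypot_ratio_nonpos; lra). nra.
Qed.

Lemma center_of_balanced mu x : 0 < nu0 -> 0 < x ->
  is_RInt (fun s => vertical (mu + x * s)) 0 1 0 -> mu = - x / 2.
Proof.
  intros Hnu0 Hx Hbal.
  set (H t := vertical t - nu0 * sine t).
  set (D := hypot lam (mu + x) - hypot lam mu).
  assert (HI : is_RInt (fun s => H (mu + x * s)) 0 1 (- (nu0 * (D / x)))).
  { replace (- (nu0 * (D / x))) with (0 - nu0 * (D / x)) by ring.
    exact (is_RInt_minus _ _ _ _ _ _ Hbal (is_RInt_scal _ _ _ nu0 _ (is_RInt_sine mu x ltac:(lra)))). }
  pose proof (is_RInt_reflect _ _ HI) as HIrefl.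
  pose proof (is_RInt_opp _ _ _ _ HI) as HIopp.
  assert (Hodd : forall t, H (- t) = - H t).
  { intro t. pose proof (hypot_pos lam t Hlam).
    unfold H, vertical, sine. rewrite hypot_oppr. field. lra. }
  assert (HD : D = D / x * x) by (field; lra).
  (* H is odd and nondecreasing, so if 2 mu + x < 0 the reflected integrand
     H (mu + x (1 - s)) lies below H (- (mu + x s)) = - H (mu + x s); integrating, the
     explicit [sine] part gives D >= 0, i.e. x (2 mu + x) >= 0.  Symmetrically for > 0. *)
  destruct (Rtotal_order (2 * mu + x) 0) as [Hneg | [Hzero | Hposit]]; [exfalso | lra | exfalso].
  - assert (Hle : - (nu0 * (D / x)) <= opp (- (nu0 * (D / x)))).
    { apply (is_RInt_le _ _ 0 1 _ _ Rle_0_1 HIrefl HIopp). intros s _.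
      unfold opp; simpl. rewrite <- Hodd. apply vertical_sub_sine_nondecreasing. lra. }
    unfold opp in Hle; simpl in Hle.
    assert (0 <= D) by nra.
    assert (mu ^ 2 <= (mu + x) ^ 2) by (apply (sq_le_of_hypot_le lam); unfold D in *; lra).
    nra.
  - assert (Hle : opp (- (nu0 * (D / x))) <= - (nu0 * (D / x))).
    { apply (is_RInt_le _ _ 0 1 _ _ Rle_0_1 HIopp HIrefl). intros s _.
      unfold opp; simpl. rewrite <- Hodd. apply vertical_sub_sine_nondecreasing. lra. }
    unfold opp in Hle; simpl in Hle.
    assert (D <= 0) by nra.
    assert ((mu + x) ^ 2 <= mu ^ 2) by (apply (sq_le_of_hypot_le lam); unfold D in *; lra).
    nra.
Qed.

End Centering.

Lemma profile_sq_le x s : 0 <= s <= 1 -> (- x / 2 + x * s) ^ 2 <= x ^ 2 / 4.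
Proof.
  intros Hs. replace (- x / 2 + x * s) with (x * (s - 1 / 2)) by field.
  rewrite Rpow_mult_distr. pose proof (pow2_ge_0 x). assert ((s - 1 / 2) ^ 2 <= 1 / 4) by nra. nra.
Qed.

Lemma is_RInt_inextensible_profile N1 x : 0 < N1 -> 0 < x ->
  is_RInt (fun s => N1 / hypot N1 (- x / 2 + x * s)) 0 1 (2 * N1 / x * arcsinh (x / (2 * N1))).
Proof.
  intros HN1 Hx.
  set (F s := N1 / x * arcsinh ((- x / 2 + x * s) / N1)).
  replace (2 * N1 / x * arcsinh (x / (2 * N1))) with (minus (F 1) (F 0)).
  2: { unfold F, minus, plus, opp; simpl.
       replace ((- x / 2 + x * 1) / N1) with (x / (2 * N1)) by (field; lra).
       replace ((- x / 2 + x * 0) / N1) with (- (x / (2 * N1))) by (field; lra).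
       rewrite arcsinh_opp. field. lra. }
  apply (@is_RInt_derive R_CompleteNormedModule F).
  - intros s _. set (y := (- x / 2 + x * s) / N1).
    assert (Hhyp : hypot N1 (- x / 2 + x * s) = N1 * sqrt (y ^ 2 + 1)).
    { unfold hypot. replace (N1 ^ 2 + (- x / 2 + x * s) ^ 2) with (N1 ^ 2 * (y ^ 2 + 1))
        by (unfold y; field; lra).
      rewrite sqrt_mult_alt, sqrt_pow2 by nra. reflexivity. }
    assert (Hsqrt : 0 < sqrt (y ^ 2 + 1)) by (apply sqrt_lt_R0; nra).
    assert (Hy : is_derive (fun s => (- x / 2 + x * s) / N1) s (x / N1))
      by (auto_derive; [auto | field; lra]).
    pose proof (is_derive_scal _ s (N1 / x) _
      (is_derive_comp arcsinh (fun s => (- x / 2 + x * s) / N1) s _ _ (proj2 (is_derive_Reals _ _ _) (derivable_pt_lim_arcsinh y)) Hy))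
      as HF.
    replace (N1 / hypot N1 (- x / 2 + x * s)) with (N1 / x * scal (x / N1) (/ sqrt (y ^ 2 + 1))).
    + exact HF.
    + rewrite Hhyp. change (scal (x / N1) (/ sqrt (y ^ 2 + 1))) with (x / N1 * / sqrt (y ^ 2 + 1)).
      field. lra.
  - intros s _. apply (@ex_derive_continuous R_AbsRing R_NormedModule). unfold hypot. auto_derive.
    set (t := - x / 2 + x * s).
    assert (Hpos : 0 < N1 * (N1 * 1) + t * (t * 1)) by nra.
    repeat split; auto. apply Rgt_not_eq, sqrt_lt_R0, Hpos.
Qed.

Lemma is_RInt_even_quartic_profile x A B C :
  is_RInt (fun s => A + B * (- x / 2 + x * s) ^ 2 + C * (- x / 2 + x * s) ^ 4) 0 1
    (A + B * x ^ 2 / 12 + C * x ^ 4 / 80).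
Proof.
  set (F s := A * s + B * x ^ 2 * (s - 1 / 2) ^ 3 / 3 + C * x ^ 4 * (s - 1 / 2) ^ 5 / 5).
  replace (A + B * x ^ 2 / 12 + C * x ^ 4 / 80) with (minus (F 1) (F 0))
    by (unfold F, minus, plus, opp; simpl; field).
  apply (@is_RInt_derive R_CompleteNormedModule F).
  - intros s _. unfold F. auto_derive; [auto | field].
  - intros s _. apply (@ex_derive_continuous R_AbsRing R_NormedModule). auto_derive. auto.
Qed.

(* The integrand nu(delta) lam / delta of the horizontal equation, as a function of the
   vertical force t = mu + g gam s, so that delta = hypot lam t. *)
Definition horizontal_integrand (nu : R -> R) (lam t : R) : R :=
  nu (hypot lam t) / hypot lam t * lam.

Section HorizontalIntegrand.

Variables (nu : R -> R) (N1 nu1 : R).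
Hypothesis nu_mono : forall y z, y <= z -> nu y <= nu z.
Hypothesis nu_range : forall y, 0 <= nu y <= nu1.
Hypothesis nu_sat : forall y, N1 <= y -> nu y = nu1.
Hypothesis HN1 : 0 < N1.

Let f := horizontal_integrand nu.

Lemma horizontal_integrand_factor lam t : 0 < lam ->
  f lam t = nu (hypot lam t) * (lam / hypot lam t).
Proof. intros. pose proof (hypot_pos lam t H). unfold f, horizontal_integrand. field. lra. Qed.

Lemma horizontal_integrand_nondecreasing l1 l2 t : 0 < l1 <= l2 -> f l1 t <= f l2 t.
Proof.
  intros Hl. rewrite !horizontal_integrand_factor by lra.
  apply Rmult_le_compat.
  - apply nu_range.
  - apply Rdiv_le_0_compat; [lra | apply hypot_pos; lra].
  - apply nu_mono, hypot_le. nra.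
  - apply hypot_ratio_le. exact Hl.
Qed.

Lemma horizontal_integrand_saturated lam t : N1 <= lam -> nu1 * (N1 / hypot N1 t) <= f lam t.
Proof.
  intros Hlam.
  apply Rle_trans with (f N1 t); [| apply horizontal_integrand_nondecreasing; lra].
  rewrite horizontal_integrand_factor, nu_sat by (lra || (apply le_hypot; lra)). lra.
Qed.

Lemma horizontal_integrand_deficit x lam t : 0 < lam < N1 -> t ^ 2 <= x ^ 2 / 4 ->
  f lam t + nu1 * ((N1 ^ 2 - lam ^ 2) / (2 * (N1 ^ 2 + x ^ 2 / 4) ^ 2)) * t ^ 2
  <= nu1 * (N1 / hypot N1 t).
Proof.
  intros Hlam Ht.
  rewrite horizontal_integrand_factor by lra.
  pose proof (hypot_pos N1 t HN1). pose proof (hypot_pos lam t (proj1 Hlam)).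
  pose proof (pow2_ge_0 t).
  set (A := N1 / hypot N1 t). set (B := lam / hypot lam t).
  set (M := N1 ^ 2 + x ^ 2 / 4).
  assert (HM : 0 < M) by (unfold M; nra).
  set (K := (N1 ^ 2 - lam ^ 2) / (2 * M ^ 2)).
  assert (HB : 0 <= B) by (apply Rdiv_le_0_compat; lra).
  assert (HBA : B <= A) by (apply hypot_ratio_le; lra).
  assert (HA1 : A <= 1) by (apply Rle_div_l; [lra | rewrite Rmult_1_l; apply le_hypot; lra]).
  assert (HA2 : A ^ 2 = N1 ^ 2 / (N1 ^ 2 + t ^ 2))
    by (unfold A; rewrite <- (hypot_sq N1 t); field; lra).
  assert (HB2 : B ^ 2 = lam ^ 2 / (lam ^ 2 + t ^ 2))
    by (unfold B; rewrite <- (hypot_sq lam t); field; lra).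
  assert (Hsq : A ^ 2 - B ^ 2 = t ^ 2 * (N1 ^ 2 - lam ^ 2) / ((N1 ^ 2 + t ^ 2) * (lam ^ 2 + t ^ 2)))
    by (rewrite HA2, HB2; field; split; nra).
  assert (Hgap : 2 * K * t ^ 2 <= A ^ 2 - B ^ 2).
  { rewrite Hsq. unfold K.
    replace (2 * ((N1 ^ 2 - lam ^ 2) / (2 * M ^ 2)) * t ^ 2)
      with (t ^ 2 * (N1 ^ 2 - lam ^ 2) / M ^ 2) by (field; lra).
    apply Rdiv_le_cross; [apply pow_lt; lra | apply Rmult_lt_0_compat; nra |].
    assert (N1 ^ 2 + t ^ 2 <= M /\ lam ^ 2 + t ^ 2 <= M) by (unfold M; split; nra).
    apply Rmult_le_compat_l; [apply Rmult_le_pos; nra|].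
    simpl; rewrite Rmult_1_r. apply Rmult_le_compat; nra. }
  assert (K * t ^ 2 <= A - B) by nra.
  assert (nu (hypot lam t) * B <= nu1 * B) by (apply Rmult_le_compat_r; [lra | apply nu_range]).
  assert (0 <= nu1) by (pose proof (nu_range 0); lra).
  nra.
Qed.

Lemma horizontal_integrand_critical_upper d r l t :
  (forall y, N1 - r < y < N1 -> d * (N1 - y) < nu1 - nu y) -> 0 <= d ->
  0 < l -> N1 - r < l -> l ^ 2 + t ^ 2 <= N1 ^ 2 ->
  f l t <= (nu1 - d * (N1 ^ 2 - l ^ 2 - t ^ 2) / (2 * N1)) * (1 - t ^ 2 / (2 * N1 ^ 2)).
Proof.
  intros Hnear Hd Hl Hlr Hsub.
  rewrite horizontal_integrand_factor by exact Hl.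
  pose proof (hypot_sq l t) as Hdelta2. pose proof (le_hypot l t ltac:(lra)) as Hl_delta.
  set (delta := hypot l t) in *.
  assert (Hdelta : delta <= N1) by nra.
  assert (Hnu : nu delta <= nu1 - d * (N1 - delta)).
  { destruct (Rlt_le_dec delta N1).
    - specialize (Hnear delta ltac:(lra)). lra.
    - rewrite nu_sat by lra. replace (N1 - delta) with 0 by lra. lra. }
  assert (Hgap : d * (N1 ^ 2 - l ^ 2 - t ^ 2) / (2 * N1) <= d * (N1 - delta)).
  { apply Rle_div_l; [lra|].
    replace (N1 ^ 2 - l ^ 2 - t ^ 2) with ((N1 - delta) * (N1 + delta)) by nra.
    assert (0 <= d * (N1 - delta)) by nra. nra. }
  apply Rmult_le_compat.
  - apply nu_range.
  - apply Rdiv_le_0_compat; lra.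
  - lra.
  - exact (hypot_ratio_upper l t N1 Hl Hsub).
Qed.

Lemma horizontal_integrand_critical_lower D r l t :
  (forall y, N1 - r < y < N1 -> nu1 - nu y < D * (N1 - y)) -> 0 <= D ->
  0 < l -> N1 - r < l -> t ^ 2 <= l ^ 2 -> l ^ 2 + t ^ 2 <= N1 ^ 2 ->
  nu1 * (1 - t ^ 2 / l ^ 2 / 2 - (t ^ 2 / l ^ 2) ^ 2 / 2)
    - D * (N1 * (N1 ^ 2 - l ^ 2 - t ^ 2) / (N1 ^ 2 + l ^ 2)) <= f l t.
Proof.
  intros Hnear HD Hl Hlr Htl Hsub.
  rewrite horizontal_integrand_factor by exact Hl.
  pose proof (hypot_sq l t) as Hdelta2. pose proof (le_hypot l t ltac:(lra)) as Hl_delta.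
  pose proof (hypot_ratio_lower l t Hl Htl) as Hratio.
  set (delta := hypot l t) in *.
  assert (Hdelta : delta <= N1) by nra.
  assert (Hnu : nu1 - D * (N1 - delta) <= nu delta).
  { destruct (Rlt_le_dec delta N1).
    - specialize (Hnear delta ltac:(lra)). lra.
    - rewrite nu_sat by lra. replace (N1 - delta) with 0 by lra. lra. }
  set (b := N1 * (N1 ^ 2 - l ^ 2 - t ^ 2) / (N1 ^ 2 + l ^ 2)).
  assert (Hgap : N1 - delta <= b).
  { apply Rle_div_r; [nra|].
    replace (N1 ^ 2 - l ^ 2 - t ^ 2) with ((N1 - delta) * (N1 + delta)) by nra.
    assert (l ^ 2 <= N1 * delta) by nra.
    assert (0 <= (N1 - delta) * (N1 * delta - l ^ 2)) by (apply Rmult_le_pos; lra). nra. }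
  assert (Hz : 0 <= t ^ 2 / l ^ 2 <= 1).
  { split; [apply Rdiv_le_0_compat; nra | apply Rle_div_l; nra]. }
  set (z := t ^ 2 / l ^ 2) in *.
  set (m := 1 - z / 2 - z ^ 2 / 2) in *.
  assert (Hm : 0 <= m <= 1) by (unfold m; split; nra).
  pose proof (nu_range delta).
  assert (nu delta * m <= nu delta * (l / delta)) by (apply Rmult_le_compat_l; lra).
  assert ((nu1 - D * b) * m <= nu delta * m) by (apply Rmult_le_compat_r; nra).
  assert (0 <= D * b * (1 - m)) by (apply Rmult_le_pos; nra).
  nra.
Qed.

End HorizontalIntegrand.

Definition sag_error (N1 nu1 dnu1 : R) : R := nu1 / (40 * N1 ^ 4) + dnu1 / (56 * N1 ^ 3).

Lemma sag_error_pos N1 nu1 dnu1 : 0 < N1 -> 0 <= nu1 -> 0 < dnu1 -> 0 < sag_error N1 nu1 dnu1.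
Proof.
  intros HN1 Hnu1 Hd. unfold sag_error.
  assert (0 <= nu1 / (40 * N1 ^ 4))
    by (apply Rdiv_le_0_compat; [lra | apply Rmult_lt_0_compat; [lra | apply pow_lt; lra]]).
  assert (0 < dnu1 / (56 * N1 ^ 3))
    by (apply Rdiv_lt_0_compat; [lra | apply Rmult_lt_0_compat; [lra | apply pow_lt; lra]]).
  lra.
Qed.

Definition sag_bound (N1 nu1 dnu1 eps r : R) : R :=
  Rmin (Rmin (N1 ^ 2) (2 * N1 * r))
       (Rmin (20 * eps * N1 ^ 2) (eps * dnu1 / (12 * N1) / sag_error N1 nu1 dnu1)).

Lemma sag_bound_pos N1 nu1 dnu1 eps r :
  0 < N1 -> 0 <= nu1 -> 0 < dnu1 -> 0 < eps -> 0 < r -> 0 < sag_bound N1 nu1 dnu1 eps r.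
Proof.
  intros HN1 Hnu1 Hd Heps Hr.
  pose proof (sag_error_pos N1 nu1 dnu1 HN1 Hnu1 Hd).
  assert (0 < N1 ^ 2) by (apply pow_lt; lra).
  unfold sag_bound. repeat apply Rmin_glb_lt; try nra.
  apply Rdiv_lt_0_compat; [apply Rdiv_lt_0_compat; nra | lra].
Qed.

Section SymmetricCatenary.

Variables (nu : R -> R) (N1 nu1 dnu1 eps r x lam a : R).
Hypothesis nu_mono : forall y z, y <= z -> nu y <= nu z.
Hypothesis nu_range : forall y, 0 <= nu y <= nu1.
Hypothesis nu_sat : forall y, N1 <= y -> nu y = nu1.
Hypothesis nu_near : forall y, N1 - r < y < N1 ->
  (dnu1 - eps * dnu1 / 2) * (N1 - y) < nu1 - nu y < (dnu1 + eps * dnu1 / 2) * (N1 - y).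
Hypothesis HN1 : 0 < N1.
Hypothesis Hnu1 : 0 < nu1.
Hypothesis Hdnu1 : 0 < dnu1.
Hypothesis Heps : 0 < eps < 1.
Hypothesis Hx : 0 < x.
Hypothesis Hsmall : x ^ 2 < sag_bound N1 nu1 dnu1 eps r.
Hypothesis Hlam : 0 < lam.
Hypothesis Ha : is_RInt (fun s => horizontal_integrand nu lam (- x / 2 + x * s)) 0 1 a.

(* The value of lam^2 at which the tension at the supports, sqrt (lam^2 + x^2 / 4), is N1. *)
Let L := N1 ^ 2 - x ^ 2 / 4.
Let U := nu1 * (2 * N1 / x) * arcsinh (x / (2 * N1)).

Lemma sag_small :
  x ^ 2 < N1 ^ 2 /\ x ^ 2 < 2 * N1 * r /\ x ^ 2 < 20 * eps * N1 ^ 2 /\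
  x ^ 2 * sag_error N1 nu1 dnu1 < eps * dnu1 / (12 * N1).
Proof.
  pose proof (sag_error_pos N1 nu1 dnu1 HN1 ltac:(lra) Hdnu1).
  destruct (proj1 (Rmin_Rgt _ _ _) Hsmall) as [H12 H34].
  destruct (proj1 (Rmin_Rgt _ _ _) H12), (proj1 (Rmin_Rgt _ _ _) H34).
  repeat split; try lra.
  apply Rlt_div_r; lra.
Qed.

Lemma critical_level : 0 < L /\ x ^ 2 / 4 <= L /\ N1 - sqrt L < r.
Proof.
  destruct sag_small as [HxN1 [Hxr _]].
  pose proof (pow2_ge_0 x).
  assert (HL : 0 < L) by (unfold L; lra).
  split; [exact HL | split; [unfold L; lra |]].
  pose proof (pow2_sqrt L ltac:(lra)). pose proof (sqrt_pos L).
  assert (N1 * (N1 - sqrt L) <= x ^ 2 / 4) by (unfold L in *; nra).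
  nra.
Qed.

Lemma is_RInt_saturated_profile :
  is_RInt (fun s => nu1 * (N1 / hypot N1 (- x / 2 + x * s))) 0 1 U.
Proof.
  unfold U. rewrite Rmult_assoc.
  exact (is_RInt_scal _ _ _ nu1 _ (is_RInt_inextensible_profile N1 x HN1 Hx)).
Qed.

Lemma arcsinh_mean_le_of_saturated : N1 <= lam -> U <= a.
Proof.
  intros Hsat.
  apply (is_RInt_le _ _ 0 1 _ _ Rle_0_1 is_RInt_saturated_profile Ha). intros s _.
  apply horizontal_integrand_saturated; auto.
Qed.

Lemma lt_arcsinh_mean_of_unsaturated : lam < N1 -> a < U.
Proof.
  intros Hunsat.
  set (K := (N1 ^ 2 - lam ^ 2) / (2 * (N1 ^ 2 + x ^ 2 / 4) ^ 2)).
  assert (HI : is_RInt (fun s => nu1 * (N1 / hypot N1 (- x / 2 + x * s))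
      - (0 + nu1 * K * (- x / 2 + x * s) ^ 2 + 0 * (- x / 2 + x * s) ^ 4)) 0 1
      (U - (0 + nu1 * K * x ^ 2 / 12 + 0 * x ^ 4 / 80)))
    by exact (is_RInt_minus _ _ _ _ _ _ is_RInt_saturated_profile
               (is_RInt_even_quartic_profile x 0 (nu1 * K) 0)).
  assert (a <= U - (0 + nu1 * K * x ^ 2 / 12 + 0 * x ^ 4 / 80)).
  { apply (is_RInt_le _ _ 0 1 _ _ Rle_0_1 Ha HI). intros s Hs.
    pose proof (horizontal_integrand_deficit nu N1 nu1 nu_range HN1 x lam
                  (- x / 2 + x * s) ltac:(lra) (profile_sq_le x s ltac:(lra))) as Hdef.
    fold K in Hdef. lra. }
  assert (0 < K).
  { apply Rdiv_lt_0_compat; [nra | apply Rmult_lt_0_compat; [lra | apply pow_lt; nra]]. }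
  assert (0 < nu1 * K * x ^ 2) by (apply Rmult_lt_0_compat; [nra | apply pow_lt; lra]).
  lra.
Qed.

Lemma lt_lower_bound_of_subcritical :
  lam ^ 2 <= L -> a < nu1 - x ^ 2 / (24 * N1 ^ 2) * (nu1 + (2 - 3 * eps) * dnu1 * N1).
Proof.
  intros Hsub.
  destruct critical_level as [HL [HxL HLr]].
  destruct sag_small as [_ [_ [Hx20 _]]].
  pose proof (pow2_sqrt L ltac:(lra)) as Hl2. pose proof (sqrt_lt_R0 L HL) as Hl.
  set (l := sqrt L) in *.
  set (e := (dnu1 - eps * dnu1 / 2) / (2 * N1)).
  set (A := nu1 - e * x ^ 2 / 4).
  apply Rle_lt_trans
    with (A + (e - A / (2 * N1 ^ 2)) * x ^ 2 / 12 + (- e / (2 * N1 ^ 2)) * x ^ 4 / 80).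
  - apply (is_RInt_le _ _ 0 1 _ _ Rle_0_1 Ha (is_RInt_even_quartic_profile _ _ _ _)).
    intros s Hs. pose proof (profile_sq_le x s ltac:(lra)) as Ht.
    set (t := - x / 2 + x * s) in *.
    apply Rle_trans with (horizontal_integrand nu l t).
    { apply (horizontal_integrand_nondecreasing nu nu1 nu_mono nu_range). nra. }
    eapply Rle_trans.
    { apply (horizontal_integrand_critical_upper nu N1 nu1 nu_range nu_sat HN1
               (dnu1 - eps * dnu1 / 2) r l t); [intros y Hy; apply nu_near, Hy | nra | lra | lra |].
      rewrite Hl2. unfold L. lra. }
    right. rewrite Hl2. unfold A, e, L. field. lra.
  - assert (Hex : e * x ^ 2 < 20 * eps * dnu1 * N1).
    { replace (e * x ^ 2) with ((dnu1 - eps * dnu1 / 2) * x ^ 2 / (2 * N1)) by (unfold e; field; lra).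
      apply Rlt_div_l; [lra|].
      assert ((dnu1 - eps * dnu1 / 2) * x ^ 2 <= dnu1 * x ^ 2)
        by (apply Rmult_le_compat_r; [apply pow2_ge_0 | nra]).
      assert (dnu1 * x ^ 2 < dnu1 * (20 * eps * N1 ^ 2)) by (apply Rmult_lt_compat_l; lra).
      assert (0 < eps * dnu1 * N1 ^ 2) by (apply Rmult_lt_0_compat; [nra | apply pow_lt; lra]).
      lra. }
    assert (Hgap : nu1 - x ^ 2 / (24 * N1 ^ 2) * (nu1 + (2 - 3 * eps) * dnu1 * N1)
      - (A + (e - A / (2 * N1 ^ 2)) * x ^ 2 / 12 + (- e / (2 * N1 ^ 2)) * x ^ 4 / 80)
      = x ^ 2 / (240 * N1 ^ 2) * (20 * eps * dnu1 * N1 - e * x ^ 2)) by (unfold A, e; field; lra).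
    assert (0 < x ^ 2 / (240 * N1 ^ 2) * (20 * eps * dnu1 * N1 - e * x ^ 2)).
    { apply Rmult_lt_0_compat; [apply Rdiv_lt_0_compat; [apply pow_lt | apply Rmult_lt_0_compat; [| apply pow_lt]] |]; lra. }
    lra.
Qed.

Lemma critical_error_le :
  nu1 / (96 * L * N1 ^ 2) + nu1 / (160 * L ^ 2) + (dnu1 + eps * dnu1 / 2) / (48 * N1 * (N1 ^ 2 + L))
  <= sag_error N1 nu1 dnu1.
Proof.
  destruct critical_level as [HL [HxL _]]. destruct sag_small as [HxN1 _].
  pose proof (pow2_ge_0 x). pose proof (pow_lt N1 2 HN1).
  assert (HL34 : 3 * N1 ^ 2 / 4 <= L) by (unfold L; lra).
  assert (H1 : nu1 / (96 * L * N1 ^ 2) <= nu1 / (72 * N1 ^ 4)).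
  { apply Rdiv_le_cross; [nra | apply Rmult_lt_0_compat; [lra | apply pow_lt; lra] |].
    replace (N1 ^ 4) with (N1 ^ 2 * N1 ^ 2) by ring.
    apply Rmult_le_compat_l; nra. }
  assert (H2 : nu1 / (160 * L ^ 2) <= nu1 / (90 * N1 ^ 4)).
  { apply Rdiv_le_cross; [nra | apply Rmult_lt_0_compat; [lra | apply pow_lt; lra] |].
    replace (N1 ^ 4) with (N1 ^ 2 * N1 ^ 2) by ring.
    apply Rmult_le_compat_l; nra. }
  assert (H3 : (dnu1 + eps * dnu1 / 2) / (48 * N1 * (N1 ^ 2 + L)) <= dnu1 / (56 * N1 ^ 3)).
  { apply Rdiv_le_cross; [nra | apply Rmult_lt_0_compat; [lra | apply pow_lt; lra] |].
    replace (N1 ^ 3) with (N1 * N1 ^ 2) by ring.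
    assert (0 <= (dnu1 - eps * dnu1) * (N1 * N1 ^ 2)) by (apply Rmult_le_pos; nra).
    assert (0 <= (dnu1 * N1) * (L - 3 * N1 ^ 2 / 4)) by (apply Rmult_le_pos; nra).
    nra. }
  unfold sag_error.
  replace (nu1 / (40 * N1 ^ 4)) with (nu1 / (72 * N1 ^ 4) + nu1 / (90 * N1 ^ 4)) by (field; lra).
  lra.
Qed.

Lemma lower_bound_le_of_supercritical :
  L <= lam ^ 2 -> nu1 - x ^ 2 / (24 * N1 ^ 2) * (nu1 + (2 + 3 * eps) * dnu1 * N1) <= a.
Proof.
  intros Hsup.
  destruct critical_level as [HL [HxL HLr]].
  destruct sag_small as [_ [_ [_ Hxerr]]].
  pose proof critical_error_le as Herr.
  pose proof (pow2_sqrt L ltac:(lra)) as Hl2. pose proof (sqrt_lt_R0 L HL) as Hl.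
  set (l := sqrt L) in *.
  set (D := dnu1 + eps * dnu1 / 2) in *.
  set (beta := N1 / (N1 ^ 2 + L)).
  apply Rle_trans with ((nu1 - D * beta * x ^ 2 / 4) + (D * beta - nu1 / (2 * L)) * x ^ 2 / 12
                        + (- nu1 / (2 * L ^ 2)) * x ^ 4 / 80).
  - set (E := nu1 / (96 * L * N1 ^ 2) + nu1 / (160 * L ^ 2) + D / (48 * N1 * (N1 ^ 2 + L))) in *.
    assert (Hgap : (nu1 - D * beta * x ^ 2 / 4) + (D * beta - nu1 / (2 * L)) * x ^ 2 / 12
                   + (- nu1 / (2 * L ^ 2)) * x ^ 4 / 80
                   - (nu1 - x ^ 2 / (24 * N1 ^ 2) * (nu1 + (2 + 3 * eps) * dnu1 * N1))
                   = x ^ 2 * (eps * dnu1 / (12 * N1) - x ^ 2 * E))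
      by (unfold E, D, beta, L in *; field; repeat split; nra).
    assert (0 <= x ^ 2 * (eps * dnu1 / (12 * N1) - x ^ 2 * E)).
    { apply Rmult_le_pos; [apply pow2_ge_0|]. pose proof (pow2_ge_0 x). nra. }
    lra.
  - apply (is_RInt_le _ _ 0 1 _ _ Rle_0_1 (is_RInt_even_quartic_profile _ _ _ _) Ha).
    intros s Hs. pose proof (profile_sq_le x s ltac:(lra)) as Ht.
    set (t := - x / 2 + x * s) in *.
    apply Rle_trans with (horizontal_integrand nu l t).
    2: { apply (horizontal_integrand_nondecreasing nu nu1 nu_mono nu_range). nra. }
    eapply Rle_trans.
    2: { apply (horizontal_integrand_critical_lower nu N1 nu1 nu_range nu_sat HN1 D r l t);
         [intros y Hy; apply nu_near, Hy | unfold D; nra | lra | lra | lra |].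
         rewrite Hl2. unfold L. lra. }
    right. rewrite Hl2. unfold D, beta, L in *. pose proof (pow2_ge_0 x). field. split; lra.
Qed.

Lemma symmetric_catenary_regime :
  ((nu1 - x ^ 2 / (24 * N1 ^ 2) * (nu1 + (2 - 3 * eps) * dnu1 * N1) <= a /\ a < U) ->
   lam ^ 2 < N1 ^ 2 /\ L < lam ^ 2) /\
  (lam ^ 2 < N1 ^ 2 /\ L < lam ^ 2 ->
   nu1 - x ^ 2 / (24 * N1 ^ 2) * (nu1 + (2 + 3 * eps) * dnu1 * N1) <= a /\ a < U).
Proof.
  split.
  - intros [Hlower Hupper]. split.
    + destruct (Rlt_le_dec lam N1) as [Hunsat | Hsat]; [nra|].
      pose proof (arcsinh_mean_le_of_saturated Hsat). lra.
    + destruct (Rlt_le_dec L (lam ^ 2)) as [Hsuper | Hsub]; [exact Hsuper|].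
      pose proof (lt_lower_bound_of_subcritical Hsub). lra.
  - intros [Hunsat Hsuper]. split.
    + apply lower_bound_le_of_supercritical. lra.
    + apply lt_arcsinh_mean_of_unsaturated. nra.
Qed.

End SymmetricCatenary.

Lemma regime_fraction_iff N1 lam x : 0 < x ->
  (0 < (N1 ^ 2 - lam ^ 2) / x ^ 2 < 1 / 4 <-> lam ^ 2 < N1 ^ 2 /\ N1 ^ 2 - x ^ 2 / 4 < lam ^ 2).
Proof.
  intros Hx. assert (Hx2 : 0 < x ^ 2) by (apply pow_lt; lra).
  set (q := (N1 ^ 2 - lam ^ 2) / x ^ 2).
  assert (Hq : N1 ^ 2 - lam ^ 2 = q * x ^ 2) by (unfold q; field; lra).
  split; intros [H1 H2]; split; nra.
Qed.

Theorem proposition4p3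
  (g : R) (nu : R -> R) (N0 N1 nu0 nu1 dnu1 eps : R) :
  0 < g ->
  stretch_limited nu N0 N1 nu0 nu1 ->
  left_derivative nu N1 dnu1 ->
  0 < eps < 1 ->
  exists gam0 : R, 0 < gam0 /\
    forall gam a lam mu : R,
      0 < gam < gam0 ->
      0 < a < nu1 ->
      0 < lam ->
      catenary_solution nu g gam a lam mu ->
      ((nu1 - (g * gam) ^ 2 / (24 * N1 ^ 2) * (nu1 + (2 - 3 * eps) * dnu1 * N1) <= a /\
        a < nu1 * (2 * N1 / (g * gam)) * arcsinh (g * gam / (2 * N1))) ->
       0 < (N1 ^ 2 - lam ^ 2) / (g * gam) ^ 2 < 1 / 4) /\
      (0 < (N1 ^ 2 - lam ^ 2) / (g * gam) ^ 2 < 1 / 4 ->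
       nu1 - (g * gam) ^ 2 / (24 * N1 ^ 2) * (nu1 + (2 + 3 * eps) * dnu1 * N1) <= a /\
       a < nu1 * (2 * N1 / (g * gam)) * arcsinh (g * gam / (2 * N1))).
Proof.
  intros Hg Hnu Hder Heps.
  destruct (stretch_limited_constants _ _ _ _ _ Hnu) as [HN [Hnu0 Hnu1]].
  pose proof (stretch_limited_range _ _ _ _ _ Hnu) as Hrange.
  pose proof (stretch_limited_left_derivative_pos _ _ _ _ _ Hnu _ Hder) as Hdnu1.
  destruct (left_derivative_linear_bounds _ _ _ (eps * dnu1 / 2) Hder ltac:(nra)) as [r [Hr Hnear]].
  rewrite (stretch_limited_saturated _ _ _ _ _ Hnu N1 (Rle_refl N1)) in Hnear.
  set (B := sag_bound N1 nu1 dnu1 eps r).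
  assert (HB : 0 < B) by (apply sag_bound_pos; lra).
  exists (sqrt B / g). split; [apply Rdiv_lt_0_compat; [apply sqrt_lt_R0 |]; lra |].
  intros gam a lam mu Hgam _ Hlam [Hh Hv].
  assert (Hx : 0 < g * gam) by nra.
  assert (Hsmall : (g * gam) ^ 2 < B).
  { rewrite <- (pow2_sqrt B) by lra.
    assert (gam * g < sqrt B) by (apply Rlt_div_r; lra). nra. }
  assert (Hmu : mu = - (g * gam) / 2).
  { apply (center_of_balanced nu nu0 lam (stretch_limited_nondecreasing _ _ _ _ _ Hnu)
             (fun y => proj1 (Hrange y))); [lra | lra | lra | exact Hv]. }
  subst mu. rewrite regime_fraction_iff by exact Hx.
  apply (symmetric_catenary_regime nu N1 nu1 dnu1 eps r); try lra; auto.
  - exact (stretch_limited_nondecreasing _ _ _ _ _ Hnu).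
  - intro y. pose proof (Hrange y). lra.
  - exact (stretch_limited_saturated _ _ _ _ _ Hnu).
Qed.
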